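(* $\widehat{C}_{2,0} = \widehat{C}_{2,1} = 1$. Equivalently (for $m=1$, which implies the case $m=0$): for every $k \in \mathbb{N}$ and every function $F \colon \mathcal{K}_k^2 \to \mathbb{Z}$ with $|F(K_1) - F(K_2)| \le 1$ whenever $K_1, K_2 \in \mathcal{K}_k^2$ share a common edge ($\dim(K_1 \cap K_2) \ge 1$), there exist $p \in \mathbb{Z}$ and $\mathcal{S} \subset F^{-1}[\{p\}]$ such that $\bigcup \mathcal{S}$ connects some opposite faces of $I^2$.
   Context: $\mathcal{K}_k^n = \{\prod_{s=1}^n [\frac{i_s-1}{k}, \frac{i_s}{k}] : i_s \in \{1,\dots,k\}\}$ (cubes dividing $I^n=[0,1]^n$); $\dim$ is topological dimension; a set $S\subset I^n$ connects some opposite faces of $I^n$ if it is connected and meets both $\{z_i=0\}$ and $\{z_i=1\}$ for some $i$; $\mathbb{Z}^{n-1}$ has the $\ell^\infty$ norm; $P\subset\mathbb{Z}^{n-1}$ is $1$-connected if any two points are joined by a finite chain in $P$ with consecutive $\ell^\infty$-distances $\le 1$. $\widehat{C}_{n,m}$ is the least constant $C>0$ such that: for every $k\in\mathbb{N}$ and every $F\colon\mathcal{K}_k^n\to\mathbb{Z}^{n-1}$ with $\|F(K_1)-F(K_2)\|_\infty\le 1$ whenever $\dim(K_1\cap K_2)\ge m$, there exist a $1$-connected $P\subset\mathbb{Z}^{n-1}$ with $|P|\le C$ and $\mathcal{S}\subset F^{-1}[P]$ with $\bigcup\mathcal{S}$ connecting some opposite faces of $I^n$. *)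

From HB Require Import structures.
From mathcomp Require Import all_boot all_order all_algebra.
From mathcomp Require Import all_classical all_reals all_analysis.
From mathcomp Require Import Rstruct Rstruct_topology.
Set Implicit Arguments. Unset Strict Implicit. Unset Printing Implicit Defensive.
Import Order.TTheory GRing.Theory Num.Theory.
Local Open Scope classical_set_scope.
Local Open Scope ring_scope.

Notation RR := Rdefinitions.R.

(* A cube of K_k^n is indexed by i : 'I_n -> 'I_k (0-based): the cube
   prod_s [i_s/k, (i_s+1)/k]  (= [(i'_s - 1)/k, i'_s/k] with i'_s = i_s+1). *)
Definition cube_idx (n k : nat) := {ffun 'I_n -> 'I_k}.

Definition lo (k : nat) (a : nat) : RR := a%:R / k%:R.
Definition hi (k : nat) (a : nat) : RR := a.+1%:R / k%:R.

Definition cube (n k : nat) (i : cube_idx n k) : set 'rV[RR]_n :=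
  [set z | forall s : 'I_n, lo k (i s) <= z 0 s <= hi k (i s)].

(* The intersection
   of two axis-parallel closed boxes is the closed box
   prod_s [max lo, min hi]; it is empty (dimension -1) iff some side is
   reversed, and otherwise its (topological) dimension is the number of
   nondegenerate sides. *)
Definition inter_lo n k (i j : cube_idx n k) (s : 'I_n) : RR :=
  Num.max (lo k (i s)) (lo k (j s)).
Definition inter_hi n k (i j : cube_idx n k) (s : 'I_n) : RR :=
  Num.min (hi k (i s)) (hi k (j s)).

Definition inter_dim n k (i j : cube_idx n k) : int :=
  if [forall s, inter_lo i j s <= inter_hi i j s]
  then (#|[pred s | inter_lo i j s < inter_hi i j s]|)%:Z
  else (-1)%R.

Definition Zvec (n : nat) := 'rV[int]_(n.-1).

Definition linf_le1 n (a b : Zvec n) : bool :=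
  [forall t, `|a 0 t - b 0 t| <= 1].

(* P (a finite subset of Z^(n-1), given as a duplicate-free list) is
   1-connected: any two points are joined by a finite chain in P with
   consecutive l^oo distances <= 1. *)
Definition one_connected n (P : seq (Zvec n)) : Prop :=
  forall x y, x \in P -> y \in P ->
    exists c : seq (Zvec n),
      [/\ all (fun z => z \in P) c, path (@linf_le1 n) x c & last x c = y].

Definition cube_union n k (S : {set cube_idx n k}) : set 'rV[RR]_n :=
  [set z | exists2 K, K \in S & cube K z].

Definition connects_opposite_faces n (A : set 'rV[RR]_n) : Prop :=
  connected A /\
  exists s : 'I_n, (exists2 z, A z & z 0 s = 0) /\ (exists2 z, A z & z 0 s = 1).

Definition Chat_admissible (n m : nat) (C : RR) : Prop :=
  forall (k : nat), (0 < k)%N ->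
  forall F : cube_idx n k -> Zvec n,
    (forall K1 K2, (m%:Z <= inter_dim K1 K2) -> linf_le1 (F K1) (F K2)) ->
    exists (P : seq (Zvec n)) (S : {set cube_idx n k}),
      [/\ uniq P, one_connected P, (size P)%:R <= C,
          (forall K, K \in S -> F K \in P)
        & connects_opposite_faces (cube_union S)].

Definition is_Chat (n m : nat) (C : RR) : Prop :=
  0 < C /\ Chat_admissible n m C /\
  (forall C' : RR, 0 < C' -> Chat_admissible n m C' -> C <= C').

From mathcomp Require Import all_boot all_order all_algebra.
From mathcomp Require Import all_classical all_reals all_analysis.
From mathcomp Require Import Rstruct Rstruct_topology.
From mathcomp Require Import zify lra.
Set Implicit Arguments. Unset Strict Implicit. Unset Printing Implicit Defensive.
Import Order.TTheory GRing.Theory Num.Theory.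

(* Write f for the integer attached to each square of the k x k grid and let
   t0 be the least value whose sublevel set {f <= t0} contains an
   edge-connected left-right crossing.  The hex lemma, applied to {f <> t0} in
   both orientations, yields either a king-connected crossing inside the level
   set {f = t0}, or edge-connected crossings of {f <> t0} in both directions.
   Along an edge-connected path avoiding t0 the Lipschitz condition keeps f on
   one side of t0, so the second alternative produces a left-right crossing
   below t0 (excluded by minimality) or a left-right and a top-bottom crossing
   of disjoint sets (excluded by a parity argument).  The squares of a
   king-connected crossing have a connected union touching two opposite
   faces, so one value p already suffices; the lower bound 1 is trivial.
   The hex lemma itself follows Gale's proof: on a board framed by black
   columns and white rows, the walk along the black/white interface cannot
   revisit an edge, hence stops at a corner of the frame. *)

(** * Paths of lattice cells *)

Definition cell := (nat * nat)%type.

Definition natdist (a b : nat) := (a - b) + (b - a).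
Definition adj4 (a b : cell) := natdist a.1 b.1 + natdist a.2 b.2 == 1.
Definition adj8 (a b : cell) := (natdist a.1 b.1 <= 1) && (natdist a.2 b.2 <= 1).

Lemma adj4C : symmetric adj4.
Proof. by move=> a b; rewrite /adj4 /natdist; apply/eqP/eqP; lia. Qed.

Lemma adj4_le1 a b : adj4 a b -> natdist a.1 b.1 <= 1 /\ natdist a.2 b.2 <= 1.
Proof. by rewrite /adj4 /natdist; lia. Qed.

Definition linked (R : rel cell) (P : pred cell) (x y : cell) :=
  exists s, [/\ path R x s, all P (x :: s) & last x s = y].

Lemma linked_refl (R : rel cell) (P : pred cell) x : P x -> linked R P x x.
Proof. by move=> Px; exists [::]; rewrite /= Px. Qed.

Lemma linked1 (R : rel cell) (P : pred cell) x y :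
  P x -> P y -> R x y -> linked R P x y.
Proof. by move=> Px Py Rxy; exists [:: y]; rewrite /= Px Py Rxy. Qed.

Lemma linked_trans (R : rel cell) (P : pred cell) x y z :
  linked R P x y -> linked R P y z -> linked R P x z.
Proof.
move=> [s [ps Ps <-]] [t [pt /= /andP[_ Pt] <-]]; exists (s ++ t).
by rewrite cat_path ps pt -cat_cons all_cat Ps Pt last_cat.
Qed.

Lemma path_reverse (R : rel cell) x s : symmetric R -> path R x s ->
  exists y t, [/\ path R y t, y = last x s, last y t = x & (y :: t) =i (x :: s)].
Proof.
move=> symR p; have revE : last x s :: rev (belast x s) = rev (x :: s).
  by rewrite [in RHS]lastI rev_rcons.
exists (last x s), (rev (belast x s)); split => //.
- by rewrite rev_path; apply: sub_path p => a b; rewrite symR.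
- by rewrite -[last _ _]/(last x (last x s :: rev (belast x s))) revE rev_cons last_rcons.
- by move=> z; rewrite revE mem_rev.
Qed.

Lemma linked_sym (R : rel cell) (P : pred cell) x y :
  symmetric R -> linked R P x y -> linked R P y x.
Proof.
move=> symR [s [ps Ps <-]]; have [z [t [pt zE tE eq_ts]]] := path_reverse symR ps.
by exists t; rewrite -zE (eq_all_r eq_ts).
Qed.

Section PathWindow.
Variables (R : rel cell) (g : cell -> nat) (L H : nat).
Hypothesis g_lipschitz : forall a b, R a b -> natdist (g a) (g b) <= 1.

Lemma path_stop_at x s : path R x s -> all (fun c => L <= g c) (x :: s) ->
  g x <= H -> H <= g (last x s) ->
  exists s', [/\ path R x s', all (fun c => L <= g c <= H) (x :: s'),
     g (last x s') = H & {subset x :: s' <= x :: s}].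
Proof.
elim: s x => [|y s IHs] x /=.
  move=> _ /andP[Lx _] xH Hx; exists [::]; split => //=; first by rewrite Lx xH.
  by apply/eqP; rewrite eqn_leq xH Hx.
move=> /andP[Rxy ps] /andP[Lx Ls] xH Hl.
have [xH'|Hx] := ltnP (g x) H; last first.
  exists [::]; split => //=; first by rewrite Lx xH.
    by apply/eqP; rewrite eqn_leq xH Hx.
  by move=> z; rewrite mem_seq1 => /eqP->; rewrite mem_head.
have yH : g y <= H by move: (g_lipschitz Rxy); rewrite /natdist; lia.
have [s' [ps' Ls' Hs' sub']] := IHs y ps Ls yH Hl.
exists (y :: s'); split => //=; first by rewrite Rxy.
  by rewrite Lx xH.
move=> z; rewrite in_cons => /orP[/eqP->|/sub' zs]; first by rewrite mem_head.
by rewrite in_cons zs orbT.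
Qed.

Lemma path_window x s : path R x s -> has (fun c => g c <= L) (x :: s) ->
  H <= g (last x s) -> L <= H ->
  exists x' s', [/\ path R x' s', all (fun c => L <= g c <= H) (x' :: s'),
     g x' = L, g (last x' s') = H & {subset x' :: s' <= x :: s}].
Proof.
elim: s x => [|y s IHs] x.
  rewrite /= orbF => _ xL Hx LH; exists x, [::]; split => //=; lia.
move=> /andP[Rxy ps] hasL Hl LH.
have subS (x' : cell) s' : {subset x' :: s' <= y :: s} -> {subset x' :: s' <= x :: y :: s}.
  by move=> sub z /sub zs; rewrite in_cons zs orbT.
have [hs|] := boolP (has (fun c => g c <= L) (y :: s)).
  have [x' [s' [p' a' g' l' /subS sub']]] := IHs y ps hs Hl LH.
  by exists x', s'.
rewrite -all_predC => /allP gtL.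
have xL : g x <= L.
  case/hasP: hasL => z; rewrite in_cons => /orP[/eqP-> // | zs zL].
  by move: (gtL z zs); rewrite /= zL.
have gy : L < g y by rewrite ltnNge; apply: gtL (mem_head _ _).
have gx : g x = L by move: (g_lipschitz Rxy); rewrite /natdist; lia.
have allL : all (fun c => L <= g c) (x :: y :: s).
  apply/allP => z; rewrite in_cons => /orP[/eqP-> | zs]; first by rewrite gx.
  by rewrite ltnW // ltnNge; exact: gtL.
have pxs : path R x (y :: s) by rewrite /= Rxy.
have xH : g x <= H by rewrite gx.
have [s' [p' a' l' sub']] := path_stop_at pxs allL xH Hl.
by exists x, s'.
Qed.
End PathWindow.

(** * Local rule of the exploration walk *)

(* A configuration [l] describes the four cells around a lattice vertex,
   numbered 0..3 clockwise from the north-west: bits 0-3 say whether each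
   lies on the board, bits 4-7 whether it is black.  The walk arrives in
   direction [d] (0 = north, clockwise) with black on its left and leaves by
   the leftmost edge that again separates black (left) from white (right). *)
Definition interface (l : seq bool) x y :=
  [&& nth false l (x %% 4), nth false l (y %% 4),
      nth false l (4 + x %% 4) & ~~ nth false l (4 + y %% 4)].

Definition turn (l : seq bool) d :=
  if interface l (d + 3) d then Some ((d + 3) %% 4)
  else if interface l d d.+1 then Some d
  else if interface l d.+1 d.+2 then Some (d.+1 %% 4) else None.

Definition arriving (l : seq bool) d := interface l (d + 3) (d + 2).

Fixpoint bitseqs n : seq (seq bool) :=
  if n is n'.+1 then [seq b :: l | b <- [:: true; false], l <- bitseqs n'] else [:: [::]].

Lemma mem_bitseqs l : l \in bitseqs (size l).
Proof.
elim: l => [|b l IHl] //.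
by apply/allpairsP; exists (b, l); split => //=; case: b.
Qed.

Lemma bitseqs_all (P : pred (seq bool)) n :
  all P (bitseqs n) -> forall l, size l = n -> P l.
Proof. by move=> /allP hall l sz; apply: hall; rewrite -sz mem_bitseqs. Qed.

Definition four_dirs (P : nat -> bool) := all P (iota 0 4).

Definition all_on_board (l : seq bool) :=
  [&& nth false l 0, nth false l 1, nth false l 2 & nth false l 3].

Definition turn_injective_at l := four_dirs (fun d1 => four_dirs (fun d2 =>
  [&& arriving l d1, arriving l d2, turn l d1 == turn l d2 & turn l d1 != None] ==> (d1 == d2))).
Definition turn_total_at l := four_dirs (fun d =>
  all_on_board l && arriving l d ==>
  (turn l d != None)).
Definition turn_right_at l := four_dirs (fun d =>
  [&& all_on_board l, arriving l d & turn l d == Some (d.+1 %% 4)] ==>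
  nth false l d && nth false l (4 + d)).
Definition turn_interface_at l := four_dirs (fun d => four_dirs (fun d' =>
  (turn l d == Some d') ==> interface l d' d'.+1)).

Lemma turn_injective_tab : all turn_injective_at (bitseqs 8). Proof. by vm_compute. Qed.
Lemma turn_total_tab : all turn_total_at (bitseqs 8). Proof. by vm_compute. Qed.
Lemma turn_right_tab : all turn_right_at (bitseqs 8). Proof. by vm_compute. Qed.
Lemma turn_interface_tab : all turn_interface_at (bitseqs 8). Proof. by vm_compute. Qed.

Lemma four_dirsP (P : nat -> bool) d : four_dirs P -> d < 4 -> P d.
Proof. by move=> /allP hall d4; apply: hall; rewrite mem_iota. Qed.

Lemma turn_lt4 l d d' : d < 4 -> turn l d = Some d' -> d' < 4.
Proof.
move=> d4; rewrite /turn; case: ifP => [_ [<-]|_]; first exact: ltn_pmod.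
case: ifP => [_ [<-] //|_]; by case: ifP => [_ [<-]|//]; exact: ltn_pmod.
Qed.

(** * The hex lemma *)

Section Board.
Variable N : nat.

(* Cells of the [N] x [N] board have both coordinates in [2, N.+1], leaving
   room for a frame at 1 and [N.+2] without truncated subtraction. *)
Definition real_cell (c : cell) := (1 < c.1 <= N.+1) && (1 < c.2 <= N.+1).

Definition crossing (coord : cell -> nat) (R : rel cell) (P : pred cell) :=
  exists x s, [/\ path R x s, all (fun c => real_cell c && P c) (x :: s),
                  coord x = 2 & coord (last x s) = N.+1].

Hypothesis N_gt0 : 0 < N.

Lemma linked_crossing (coord : cell -> nat) (R : rel cell) (P Q : pred cell) x y :
  (forall a b, R a b -> natdist (coord a) (coord b) <= 1) ->
  (forall c, P c -> 1 < coord c <= N.+1 -> real_cell c && Q c) ->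
  linked R P x y -> coord x <= 2 -> N.+1 <= coord y -> crossing coord R Q.
Proof.
move=> coord_lip PQ [s [ps Ps <-]] x2 yN.
have hasx : has (fun c => coord c <= 2) (x :: s) by rewrite /= x2.
have [x' [s' [ps' win x'2 l' sub]]] := path_window coord_lip ps hasx yN N_gt0.
exists x', s'; split => //; apply/allP => c cs.
by apply: PQ (allP win c cs); apply: (allP Ps); apply: sub.
Qed.

Section Exploration.
Variable A : pred cell.

(* The framed board omits its four corners; the left and right frame columns
   are black and the top and bottom frame rows white, so the interface walk
   started at the top-right corner can only stop at the top-left corner
   (black left-right crossing) or the bottom-right one (white top-bottom
   crossing). *)
Definition on_board (c : cell) := [&& 0 < c.1 <= N.+2, 0 < c.2 <= N.+2 &
  ~~ (((c.1 == 1) || (c.1 == N.+2)) && ((c.2 == 1) || (c.2 == N.+2)))].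

Definition black (c : cell) :=
  if real_cell c then A c else (c.2 == 1) || (c.2 == N.+2).

Definition separates (c c' : cell) := [&& on_board c, on_board c', black c & ~~ black c'].

Definition corner (v : cell) (i : nat) : cell :=
  match i %% 4 with
  | 0 => (v.1.-1, v.2.-1) | 1 => (v.1.-1, v.2) | 2 => v | _ => (v.1, v.2.-1)
  end.

Definition shift (v : cell) (d : nat) : cell :=
  match d with
  | 0 => (v.1.-1, v.2) | 1 => (v.1, v.2.+1) | 2 => (v.1.+1, v.2) | _ => (v.1, v.2.-1)
  end.

Definition config v :=
  [:: on_board (corner v 0); on_board (corner v 1); on_board (corner v 2);
      on_board (corner v 3); black (corner v 0); black (corner v 1);
      black (corner v 2); black (corner v 3)].

Definition interface_edge (e : cell * nat) :=
  (e.2 < 4) && separates (corner e.1 e.2) (corner e.1 e.2.+1).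

Definition next_edge (e : cell * nat) :=
  let v := shift e.1 e.2 in omap (pair v) (turn (config v) e.2).

Lemma corner_mod v i : corner v (i %% 4) = corner v i.
Proof. by rewrite /corner modn_mod. Qed.

Lemma corner_modS v i : corner v (i %% 4).+1 = corner v i.+1.
Proof.
by rewrite -corner_mod -[RHS]corner_mod -[(i %% 4).+1]addn1 -[i.+1]addn1 modnDml.
Qed.

Lemma corner_addn4 v d : corner v (d + 4) = corner v d.
Proof. by rewrite -corner_mod modnDr corner_mod. Qed.

Lemma interface_config v x y :
  interface (config v) x y = separates (corner v x) (corner v y).
Proof.
rewrite /interface /separates -(corner_mod v x) -(corner_mod v y).
have := ltn_pmod x (isT : 0 < 4); have := ltn_pmod y (isT : 0 < 4).
by case: (x %% 4) => [|[|[|[|//]]]]; case: (y %% 4) => [|[|[|[|//]]]].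
Qed.

Lemma nth_config v d : d < 4 ->
  nth false (config v) d = on_board (corner v d) /\
  nth false (config v) (4 + d) = black (corner v d).
Proof. by case: d => [|[|[|[|]]]]. Qed.

Lemma size_config v : size (config v) = 8. Proof. by []. Qed.

Lemma interface_edgeE e :
  interface_edge e = (e.2 < 4) && interface (config e.1) e.2 e.2.+1.
Proof. by rewrite interface_config. Qed.

Lemma corner_shift u d : d < 4 ->
  corner u d = corner (shift u d) (d + 3) /\ corner u d.+1 = corner (shift u d) (d + 2).
Proof. by case: u => a b; case: d => [|[|[|[|]]]]. Qed.

Lemma interface_edge_arriving e :
  interface_edge e -> arriving (config (shift e.1 e.2)) e.2.
Proof.
case: e => u d /andP[d4 sep]; rewrite /arriving interface_config /=.
by have [<- <-] := corner_shift u d4.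
Qed.

Lemma corner_bounds v i :
  [/\ v.1.-1 <= (corner v i).1 <= v.1 & v.2.-1 <= (corner v i).2 <= v.2].
Proof.
rewrite -corner_mod; have := ltn_pmod i (isT : 0 < 4).
case: (i %% 4) => [|[|[|[|//]]]] _; rewrite /corner /=; split; lia.
Qed.

Lemma on_board_pos c : on_board c -> 0 < c.1 /\ 0 < c.2.
Proof. by case/and3P => /andP[-> _] /andP[-> _]. Qed.

Lemma next_edge_inv e e' : next_edge e = Some e' ->
  e'.1 = shift e.1 e.2 /\ turn (config (shift e.1 e.2)) e.2 = Some e'.2.
Proof. by rewrite /next_edge; case: turn => // d [<-]. Qed.

Lemma next_interface_edge e e' :
  interface_edge e -> next_edge e = Some e' -> interface_edge e'.
Proof.
case: e e' => u d [v d']; rewrite interface_edgeE => /andP[/= d4 _] /next_edge_inv [/= -> tE].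
have d'4 := turn_lt4 d4 tE; rewrite interface_edgeE d'4.
have := bitseqs_all turn_interface_tab (size_config (shift u d)).
by move/four_dirsP/(_ d4)/four_dirsP/(_ d'4); rewrite tE eqxx.
Qed.

Lemma shift_inj u1 u2 d :
  interface_edge (u1, d) -> interface_edge (u2, d) -> shift u1 d = shift u2 d -> u1 = u2.
Proof.
case: u1 u2 => a1 b1 [a2 b2]; rewrite /interface_edge /separates /=.
case: d => [|[|[|[|//]]]] /= /andP[_ /andP[h1 _]] /andP[_ /andP[h2 _]];
  have [p1 q1] := on_board_pos h1; have [p2 q2] := on_board_pos h2;
  move: p1 q1 p2 q2 => /= p1 q1 p2 q2 []; try by move=> -> ->.
- by move=> e1 ->; congr pair; lia.
- by move=> -> e1; congr pair; lia.
Qed.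

Lemma next_edge_inj e1 e2 e : interface_edge e1 -> interface_edge e2 ->
  next_edge e1 = Some e -> next_edge e2 = Some e -> e1 = e2.
Proof.
case: e1 e2 => u1 d1 [u2 d2] i1 i2 /next_edge_inv[h1 t1] /next_edge_inv[h2 t2].
have a1 := interface_edge_arriving i1; have a2 := interface_edge_arriving i2.
move: (i1) (i2); rewrite !interface_edgeE /= => /andP[d14 _] /andP[d24 _].
have sh : shift u1 d1 = shift u2 d2 by rewrite -h1 -h2.
rewrite /= sh in t1 a1; rewrite /= in t2 a2.
have := bitseqs_all turn_injective_tab (size_config (shift u2 d2)).
move/four_dirsP/(_ d14)/four_dirsP/(_ d24).
rewrite a1 a2 t1 t2 eqxx /= => /eqP ed; subst d2.
by rewrite (shift_inj i1 i2 sh).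
Qed.

Lemma black_frame c : ~~ real_cell c -> black c = (c.2 == 1) || (c.2 == N.+2).
Proof. by rewrite /black => /negbTE ->. Qed.

Lemma frame_row_white c : on_board c -> (c.1 <= 1) || (N.+2 <= c.1) -> ~~ black c.
Proof. by move=> + +; rewrite /black; case: ifP; rewrite /on_board /real_cell; lia. Qed.

Lemma frame_col_black c : on_board c -> (c.2 <= 1) || (N.+2 <= c.2) -> black c.
Proof. by move=> + +; rewrite /black; case: ifP; rewrite /on_board /real_cell; lia. Qed.

Ltac board := rewrite /on_board /=; lia.
Ltac frame := rewrite black_frame /=; [lia | rewrite /real_cell /=; lia].

Definition vTL : cell := (2, 2).
Definition vTR : cell := (2, N.+2).
Definition vBL : cell := (N.+2, 2).
Definition vBR : cell := (N.+2, N.+2).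

Lemma configE v : config v =
  [:: on_board (v.1.-1, v.2.-1); on_board (v.1.-1, v.2); on_board v; on_board (v.1, v.2.-1);
      black (v.1.-1, v.2.-1); black (v.1.-1, v.2); black v; black (v.1, v.2.-1)].
Proof. by []. Qed.

Lemma config_TL :
  config vTL = [:: false; true; true; true; black (1, 1); false; black (2, 2); true].
Proof.
rewrite configE /=.
have -> : on_board (1, 1) = false by board.
have -> : on_board (1, 2) = true by board.
have -> : on_board (2, 2) = true by board.
have -> : on_board (2, 1) = true by board.
have -> : black (1, 2) = false by frame.
by have -> : black (2, 1) = true by frame.
Qed.

Lemma config_TR : config vTR =
  [:: true; false; true; true; false; black (1, N.+2); true; black (2, N.+1)].
Proof.
rewrite configE /=.
have -> : on_board (1, N.+1) = true by board.
have -> : on_board (1, N.+2) = false by board.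
have -> : on_board (2, N.+2) = true by board.
have -> : on_board (2, N.+1) = true by board.
have -> : black (1, N.+1) = false by frame.
by have -> : black (2, N.+2) = true by frame.
Qed.

Lemma config_BL : config vBL =
  [:: true; true; true; false; true; black (N.+1, 2); false; black (N.+2, 1)].
Proof.
rewrite configE /=.
have -> : on_board (N.+1, 1) = true by board.
have -> : on_board (N.+1, 2) = true by board.
have -> : on_board (N.+2, 2) = true by board.
have -> : on_board (N.+2, 1) = false by board.
have -> : black (N.+1, 1) = true by frame.
by have -> : black (N.+2, 2) = false by frame.
Qed.

Lemma config_BR : config vBR =
  [:: true; true; false; true; black (N.+1, N.+1); true; black (N.+2, N.+2); false].
Proof.
rewrite configE /=.
have -> : on_board (N.+1, N.+1) = true by board.
have -> : on_board (N.+1, N.+2) = true by board.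
have -> : on_board (N.+2, N.+2) = false by board.
have -> : on_board (N.+2, N.+1) = true by board.
have -> : black (N.+1, N.+2) = true by frame.
by have -> : black (N.+2, N.+1) = false by frame.
Qed.

Lemma not_arriving_TR d : d < 4 -> ~~ arriving (config vTR) d.
Proof. by rewrite config_TR; do 2 case: black; case: d => [|[|[|[|]]]]. Qed.

Lemma not_arriving_BL d : d < 4 -> ~~ arriving (config vBL) d.
Proof. by rewrite config_BL; do 2 case: black; case: d => [|[|[|[|]]]]. Qed.

Lemma turn_TL d : d < 4 -> turn (config vTL) d = None.
Proof. by rewrite config_TL; do 2 case: black; case: d => [|[|[|[|]]]]. Qed.

Lemma turn_BR d : d < 4 -> turn (config vBR) d = None.
Proof. by rewrite config_BR; do 2 case: black; case: d => [|[|[|[|]]]]. Qed.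

Definition inner_vertex v := all_on_board (config v).

Lemma arriving_box v d : arriving (config v) d -> (1 < v.1 <= N.+2) && (1 < v.2 <= N.+2).
Proof.
rewrite /arriving interface_config => /and4P[b1 b2 blk wht].
have [/andP[r1 r1'] /andP[c1 c1']] := corner_bounds v (d + 3).
have [/andP[r2 r2'] /andP[c2 c2']] := corner_bounds v (d + 2).
have h1 : ~~ (((corner v (d + 3)).1 <= 1) || (N.+2 <= (corner v (d + 3)).1)).
  by apply/negP => /(frame_row_white b1); rewrite blk.
have h2 : ~~ (((corner v (d + 2)).2 <= 1) || (N.+2 <= (corner v (d + 2)).2)).
  by apply/negP => /(frame_col_black b2); rewrite (negbTE wht).
lia.
Qed.

Lemma exit_vertex e : interface_edge e -> ~~ inner_vertex (shift e.1 e.2) ->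
  next_edge e = None /\ (shift e.1 e.2 = vTL \/ shift e.1 e.2 = vBR).
Proof.
move=> ie; have := interface_edge_arriving ie.
have d4 : e.2 < 4 by case/andP: ie.
rewrite /next_edge; case: (shift e.1 e.2) => a b arr.
have /andP[ha hb] := arriving_box arr.
move=> outer; have : ((a == 2) || (a == N.+2)) && ((b == 2) || (b == N.+2)).
  by move: ha hb outer; rewrite /inner_vertex /all_on_board /= /on_board /=; lia.
case/andP => /orP[] /eqP ea /orP[] /eqP eb; subst a b.
- by rewrite -/vTL turn_TL //; split => //; left.
- by rewrite -/vTR (negbTE (not_arriving_TR d4)) in arr.
- by rewrite -/vBL (negbTE (not_arriving_BL d4)) in arr.
- by rewrite -/vBR turn_BR //; split => //; right.
Qed.

Definition start_edge : cell * nat := (vTR, if black (2, N.+1) then 3 else 2).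

Lemma start_interface_edge : interface_edge start_edge.
Proof. by rewrite interface_edgeE /start_edge /= config_TR /interface /=; case: ifP. Qed.

Lemma next_edge_neq_start e : interface_edge e -> next_edge e <> Some start_edge.
Proof.
move=> ie /next_edge_inv [/= sh _].
have d4 : e.2 < 4 by case/andP: ie.
by have := interface_edge_arriving ie; rewrite -sh (negbTE (not_arriving_TR d4)).
Qed.

Fixpoint explore n : option (cell * nat) :=
  if n is n'.+1 then obind next_edge (explore n') else Some start_edge.

Lemma explore_interface n e : explore n = Some e -> interface_edge e.
Proof.
elim: n e => [|n IHn] e /=; first by case=> <-; exact: start_interface_edge.
by case E: (explore n) => [e'|//]; apply: next_interface_edge; exact: IHn.
Qed.

Lemma explore_inj i j e : explore i = Some e -> explore j = Some e -> i = j.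
Proof.
elim: i j e => [|i IHi] [|j] e //=.
- case=> <-; case E: (explore j) => [e'|//] /= h.
  by have := next_edge_neq_start (explore_interface E); rewrite h.
- case E: (explore i) => [e'|//] /= h [h'].
  by have := next_edge_neq_start (explore_interface E); rewrite h h'.
- case E: (explore i) => [e1|//]; case F: (explore j) => [e2|//] /= h1 h2.
  have ee := next_edge_inj (explore_interface E) (explore_interface F) h1 h2; subst e2.
  by rewrite (IHi j e1 E F).
Qed.

Definition edge_universe :=
  [seq (ab, d) | ab <- [seq (a, b) | a <- iota 0 (N + 4), b <- iota 0 (N + 4)],
                 d <- iota 0 4].

Lemma mem_edge_universe e : interface_edge e -> e \in edge_universe.
Proof.
case: e => [[a b] d] /andP[/= d4 /and3P[i1 i2 _]].
have := corner_bounds (a, b) d; have := corner_bounds (a, b) d.+1.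
move: i1 i2; rewrite /on_board.
move=> /and3P[/andP[_ x1] /andP[_ y1] _] /and3P[/andP[_ x2] /andP[_ y2] _].
move=> [/andP[p1 _] /andP[q1 _]] [/andP[p2 _] /andP[q2 _]].
apply/allpairsP; exists ((a, b), d); split; rewrite ?mem_iota //=.
apply/allpairsP; exists (a, b); split; rewrite // !mem_iota /=.
  by move: x1 p2 => /=; lia.
by move: y1 q2 => /=; lia.
Qed.

Lemma explore_stops : exists m e, explore m = Some e /\ next_edge e = None.
Proof.
have first_none n : explore n = None -> exists m e, explore m = Some e /\ next_edge e = None.
  elim: n => [|n IHn] //=; case E: (explore n) => [e|] h; [by exists n, e | exact: IHn].
set M := size edge_universe.
have [/hasP[i _ /eqP]|] := boolP (has (fun i => explore i == None) (iota 0 M.+1)).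
  exact: first_none.
rewrite -all_predC => /allP someE.
have explore_some i : i < M.+1 -> {e | explore i = Some e}.
  move=> iM; case E: (explore i) => [e|]; first by exists e.
  by have := someE i; rewrite mem_iota add0n iM /= E => /(_ isT).
pose s := [seq odflt start_edge (explore i) | i <- iota 0 M.+1].
have us : uniq s.
  rewrite map_inj_in_uniq ?iota_uniq // => i j; rewrite !mem_iota !add0n /= => iM jM.
  case: (explore_some i iM) (explore_some j jM) => [ei Ei] [ej Ej].
  by rewrite Ei Ej /= => eij; subst ej; exact: explore_inj Ei Ej.
have ss : {subset s <= edge_universe}.
  move=> x /mapP [i]; rewrite mem_iota add0n /= => iM ->.
  case: (explore_some i iM) => ei Ei; rewrite Ei.
  exact/mem_edge_universe/(explore_interface Ei).
by have := uniq_leq_size us ss; rewrite size_map size_iota -/M ltnn.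
Qed.

Definition left_cell (e : cell * nat) := corner e.1 e.2.
Definition right_cell (e : cell * nat) := corner e.1 e.2.+1.
Definition black_on c := on_board c && black c.
Definition white_on c := on_board c && ~~ black c.

Lemma interface_edge_colors e :
  interface_edge e -> black_on (left_cell e) && white_on (right_cell e).
Proof.
by case/andP => _ /and4P[on1 on2 blk wht]; rewrite /black_on /white_on on1 on2 blk wht.
Qed.

Lemma adj8_corners v i j : adj8 (corner v i) (corner v j).
Proof.
have [/andP[a1 a2] /andP[b1 b2]] := corner_bounds v i.
have [/andP[c1 c2] /andP[d1 d2]] := corner_bounds v j.
rewrite /adj8 /natdist; lia.
Qed.

Lemma adj4_corners v i : 0 < v.1.-1 -> 0 < v.2.-1 -> adj4 (corner v i) (corner v i.+1).
Proof.
move=> p1 p2; rewrite -corner_modS -corner_mod; have := ltn_pmod i (isT : 0 < 4).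
by case: (i %% 4) => [|[|[|[|//]]]] _; rewrite /corner /adj4 /natdist /=; lia.
Qed.

Lemma next_edge_linked e e' : interface_edge e -> next_edge e = Some e' ->
  linked adj4 black_on (left_cell e) (left_cell e') /\
  linked adj8 white_on (right_cell e) (right_cell e').
Proof.
move=> ie ne; have /andP[be we] := interface_edge_colors ie.
have /andP[be' we'] := interface_edge_colors (next_interface_edge ie ne).
have inner : inner_vertex (shift e.1 e.2).
  by apply/negPn/negP => /(exit_vertex ie) [stop _]; rewrite stop in ne.
have [/= sh tE] := next_edge_inv ne.
case: e e' sh ie ne be we be' we' inner tE => u d [w d'] /= -> ie _.
rewrite /left_cell /right_cell /= => be we be' we' inner tE.
have d4 : d < 4 by case/andP: ie.
have [c1 c2] := corner_shift u d4; rewrite c1 c2 {c1 c2} in be we *.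
set v := shift u d in inner tE be we be' we' *.
split; first last.
  by apply: linked1 => //; apply: adj8_corners.
have [p1 p2] : 0 < v.1.-1 /\ 0 < v.2.-1.
  by case/and4P: inner => /on_board_pos [].
have c3 : corner v (d + 3).+1 = corner v d by rewrite -addnS corner_addn4.
have arr : arriving (config v) d.
  by have := interface_edge_arriving ie.
move: (tE); rewrite /turn; case: ifP => _.
  by case=> ?; subst d'; rewrite corner_mod; apply: linked_refl.
case: ifP => _.
  by case=> ?; subst d'; apply: linked1 => //; rewrite -c3; apply: adj4_corners.
case: ifP => // _ [?]; subst d'; rewrite corner_mod in be' *.
(* A right turn pivots around the cell [corner v d], which the table shows
   to be a black cell of the board. *)
have := bitseqs_all turn_right_tab (size_config v).
move/four_dirsP/(_ d4); rewrite (inner : all_on_board (config v)) arr tE eqxx.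
have [-> ->] := nth_config v d4; case/andP => onb blk.
have bd : black_on (corner v d) by rewrite /black_on onb blk.
apply: (@linked_trans _ _ _ (corner v d)); apply: linked1 => //.
  by rewrite -c3; apply: adj4_corners.
exact: adj4_corners.
Qed.

Lemma explore_linked n e : explore n = Some e ->
  linked adj4 black_on (left_cell start_edge) (left_cell e) /\
  linked adj8 white_on (right_cell start_edge) (right_cell e).
Proof.
elim: n e => [|n IHn] e /=.
  case=> <-; have /andP[b w] := interface_edge_colors start_interface_edge.
  by split; apply: linked_refl.
case E: (explore n) => [e'|//] /= ne.
have [r1 r2] := IHn e' E; have [s1 s2] := next_edge_linked (explore_interface E) ne.
by split; [apply: linked_trans r1 s1 | apply: linked_trans r2 s2].
Qed.

Lemma black_on_real c : black_on c -> 1 < c.2 <= N.+1 -> real_cell c && A c.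
Proof.
rewrite /black_on /black => /andP[onb]; case: ifP => // /negbT nr bc hc.
by exfalso; move: onb bc hc nr; rewrite /on_board /real_cell; lia.
Qed.

Lemma white_on_real c : white_on c -> 1 < c.1 <= N.+1 -> real_cell c && ~~ A c.
Proof.
rewrite /white_on /black => /andP[onb]; case: ifP => // /negbT nr bc hc.
by exfalso; move: onb bc hc nr; rewrite /on_board /real_cell; lia.
Qed.

Lemma explore_exit : exists n e, explore n = Some e /\
  (shift e.1 e.2 = vTL \/ shift e.1 e.2 = vBR).
Proof.
have [n [e [En stop]]] := explore_stops; exists n, e; split => //.
have ie := explore_interface En; have d4 : e.2 < 4 by case/andP: ie.
suff outer : ~~ inner_vertex (shift e.1 e.2) by case: (exit_vertex ie outer).
apply/negP => inner; have := bitseqs_all turn_total_tab (size_config (shift e.1 e.2)).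
move/four_dirsP/(_ d4); rewrite (inner : all_on_board _) interface_edge_arriving //=.
by move: stop; rewrite /next_edge; case: turn.
Qed.

Lemma hex : crossing snd adj4 A \/ crossing fst adj8 (predC A).
Proof.
have [n [e [En atV]]] := explore_exit; have [blk wht] := explore_linked En.
have ie := explore_interface En; have d4 : e.2 < 4 by case/andP: ie.
have [c1 c2] := corner_shift e.1 d4; case: atV => [atTL|atBR].
- left; apply: (linked_crossing (P := black_on)) (linked_sym adj4C blk) _ _.
  + by move=> a b /adj4_le1 [].
  + exact: black_on_real.
  + rewrite /left_cell c1 atTL; have [_ /andP[_ h]] := corner_bounds vTL (e.2 + 3).
    by move: h; rewrite /vTL.
  + have [_ /andP[h _]] := corner_bounds vTR start_edge.2; move: h.
    by rewrite /left_cell /start_edge /= => h; lia.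
- right; apply: (linked_crossing (P := white_on)) wht _ _.
  + by move=> a b /andP[].
  + exact: white_on_real.
  + have [/andP[_ h] _] := corner_bounds vTR start_edge.2.+1; move: h.
    by rewrite /right_cell /start_edge /vTR /=.
  + rewrite /right_cell c2 atBR; have [/andP[h _] _] := corner_bounds vBR (e.2 + 2).
    by move: h; rewrite /vBR.
Qed.
End Exploration.
End Board.

(** * Left-right and top-bottom crossings meet *)

Fixpoint count_pairs (f : cell -> cell -> nat) (x : cell) (s : seq cell) : nat :=
  if s is y :: s' then f x y + count_pairs f y s' else 0.

Lemma odd_count_changes (S : pred cell) x s :
  odd (count_pairs (fun a b => S a != S b) x s) = (S x != S (last x s)).
Proof.
elim: s x => [|y s IHs] x /=; first by rewrite eqxx.
by rewrite oddD oddb IHs; case: (S x); case: (S y); case: (S (last y s)).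
Qed.

Lemma eq_count_pairs_in (R : rel cell) (T : pred cell) f g x s :
  path R x s -> all T (x :: s) ->
  (forall a b, R a b -> T a -> T b -> f a b = g a b) -> count_pairs f x s = count_pairs g x s.
Proof.
move=> + + fg; elim: s x => [|y s IHs] x //= /andP[Rxy p] /and3P[Tx Ty Ts].
by rewrite fg // IHs //= Ty.
Qed.

Lemma count_pairs0 x s : count_pairs (fun _ _ => 0) x s = 0.
Proof. by elim: s x => //= y s IHs x; rewrite IHs. Qed.

Lemma count_pairsD f g x s :
  count_pairs (fun a b => f a b + g a b) x s = count_pairs f x s + count_pairs g x s.
Proof. by elim: s x => //= y s IHs x; rewrite IHs addnACA. Qed.

Definition hstep (j i : nat) (a b : cell) : bool :=
  [&& a.1 == b.1, a.1 < i &
      ((a.2 == j) && (b.2 == j.+1)) || ((a.2 == j.+1) && (b.2 == j))].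

Lemma neq_cell (c z : cell) : (c != z) = ~~ ((c.1 == z.1) && (c.2 == z.2)).
Proof. by case: c z => a b [c d]. Qed.

Lemma adj4_cases (a b : cell) : adj4 a b ->
  (b.1 = a.1.+1 /\ b.2 = a.2) \/ (a.1 = b.1.+1 /\ b.2 = a.2) \/
  (b.1 = a.1 /\ b.2 = a.2.+1) \/ (b.1 = a.1 /\ a.2 = b.2.+1).
Proof. by rewrite /adj4 /natdist; lia. Qed.

Ltac hstep_cases :=
  move=> /adj4_cases /= [[-> ->]|[[-> ->]|[[-> ->]|[-> ->]]]]; rewrite /hstep /=; lia.

Lemma hstep_succ_row (a b : cell) i j : adj4 a b ->
  ~~ ((a.1 == i) && (a.2 == j)) -> ~~ ((b.1 == i) && (b.2 == j)) ->
  hstep j i.+1 a b = hstep j i a b.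
Proof. by case: a b => a1 a2 [b1 b2]; hstep_cases. Qed.

Lemma hstep_column_pair (a b : cell) i j : adj4 a b ->
  ~~ ((a.1 == i) && (a.2 == j.+1)) -> ~~ ((b.1 == i) && (b.2 == j.+1)) ->
  nat_of_bool (((a.2 == j.+1) && (a.1 < i)) != ((b.2 == j.+1) && (b.1 < i))) =
  hstep j i a b + hstep j.+1 i a b.
Proof. by case: a b => a1 a2 [b1 b2]; hstep_cases. Qed.

Lemma hstep_last_row (a b : cell) M j : adj4 a b -> a.1 <= M -> b.1 <= M ->
  ~~ ((a.1 == M) && (a.2 == j)) -> ~~ ((b.1 == M) && (b.2 == j)) ->
  nat_of_bool ((a.2 <= j) != (b.2 <= j)) = hstep j M a b.
Proof. by case: a b => a1 a2 [b1 b2]; hstep_cases. Qed.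

(* [above_cut z] counts the horizontal steps of the path [x :: s] across the
   vertical line between columns [z.2] and [z.2.+1], strictly above row [z.1].
   Off the path its parity cannot change along a 4-step, yet it is even on the
   top row and odd on the bottom row, because the path runs from column 1 to
   column [N.+2]. *)
Section CutParity.
Variables (N : nat) (x : cell) (s : seq cell).
Hypothesis path_xs : path adj4 x s.
Hypothesis first_col : x.2 = 1.
Hypothesis last_col : (last x s).2 = N.+2.
Hypothesis rows_xs : all (fun c => 1 < c.1 <= N.+1) (x :: s).

Definition above_cut (z : cell) := count_pairs (fun a b => hstep z.2 z.1 a b) x s.

Lemma off_path z : z \notin x :: s -> all (fun c => c != z) (x :: s).
Proof. by move=> zs; apply/allP => c cs; apply: contraNneq zs => <-. Qed.

Lemma above_cut_down z : z \notin x :: s -> above_cut z = above_cut (z.1.+1, z.2).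
Proof.
move=> /off_path zs; apply/esym; rewrite /above_cut /=.
apply: (eq_count_pairs_in path_xs zs) => a b ab.
by rewrite !neq_cell => ha hb; rewrite hstep_succ_row.
Qed.

Lemma above_cut_right z : (z.1, z.2.+1) \notin x :: s -> 1 < z.2 -> z.2 < N.+1 ->
  odd (above_cut z) = odd (above_cut (z.1, z.2.+1)).
Proof.
move=> /off_path ws z2 zN.
pose R (c : cell) := (c.2 == z.2.+1) && (c.1 < z.1).
have : odd (count_pairs (fun a b => R a != R b) x s) = false.
  rewrite odd_count_changes /R first_col last_col.
  have -> : (1 == z.2.+1) = false by apply/negbTE; lia.
  by have -> : (N.+2 == z.2.+1) = false by apply/negbTE; lia.
rewrite (eq_count_pairs_in (g := fun a b => hstep z.2 z.1 a b + hstep z.2.+1 z.1 a b)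
  path_xs ws); last first.
  by move=> a b ab; rewrite !neq_cell /= => ha hb; rewrite /R hstep_column_pair.
by rewrite count_pairsD oddD; case: odd; case: odd.
Qed.

Lemma above_cut_top z : z.1 = 2 -> above_cut z = 0.
Proof.
move=> z1; rewrite /above_cut (eq_count_pairs_in (g := fun _ _ => 0) path_xs rows_xs).
  exact: count_pairs0.
by move=> a b _ /andP[ha _] _; rewrite /hstep z1; lia.
Qed.

Lemma above_cut_bottom z : z \notin x :: s -> z.1 = N.+1 -> 1 < z.2 <= N.+1 ->
  odd (above_cut z).
Proof.
move=> /off_path zs z1 z2.
have rows_zs : all (fun c => (c.1 <= N.+1) && (c != z)) (x :: s).
  apply/allP => c cs; rewrite (allP zs c cs) andbT.
  by case/andP: (allP rows_xs c cs).
rewrite /above_cut z1 -(eq_count_pairs_in (f := fun a b => (a.2 <= z.2) != (b.2 <= z.2))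
  path_xs rows_zs).
  rewrite odd_count_changes first_col last_col.
  by case/andP: z2 => /ltnW -> /= zN; rewrite ltnNge zN.
move=> a b ab /andP[ha1 ha2] /andP[hb1 hb2].
rewrite neq_cell z1 in ha2; rewrite neq_cell z1 in hb2.
exact: hstep_last_row.
Qed.

Lemma above_cut_adj4 z w : z \notin x :: s -> w \notin x :: s ->
  real_cell N z -> real_cell N w -> adj4 z w -> odd (above_cut z) = odd (above_cut w).
Proof.
case: z w => z1 z2 [w1 w2] + + + + /adj4_cases /=; rewrite /real_cell /=.
move=> zs ws rz rw [[e1 e2]|[[e1 e2]|[[e1 e2]|[e1 e2]]]]; subst.
- by rewrite (above_cut_down zs).
- by rewrite (above_cut_down ws).
- by apply: (@above_cut_right (z1, z2)) => /=; lia.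
- by apply/esym/(@above_cut_right (z1, w2)) => /=; lia.
Qed.

Lemma above_cut_path y t : path adj4 y t ->
  all (fun c => real_cell N c && (c \notin x :: s)) (y :: t) ->
  odd (above_cut y) = odd (above_cut (last y t)).
Proof.
elim: t y => [|z t IHt] y //= /andP[yz pt] /andP[/andP[ry ys] zt].
have /andP[/andP[rz zs] _] := zt.
by rewrite (above_cut_adj4 ys zs ry rz yz) IHt.
Qed.
End CutParity.

Lemma no_disjoint_crossings N (P1 P2 : pred cell) :
  (forall c, P1 c -> P2 c -> False) ->
  crossing N snd adj4 P1 -> crossing N fst adj4 P2 -> False.
Proof.
move=> disj [x [s [ps Ps x2 l2]]] [y [t [pt Pt y1 t1]]].
set x' : cell := (x.1, 1); set s' := x :: rcons s ((last x s).1, N.+2).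
have Pxs c : c \in x :: s -> real_cell N c && P1 c by move/(allP Ps).
have ps' : path adj4 x' s'.
  by rewrite /= rcons_path ps /adj4 /natdist /= x2 l2; apply/andP; split; lia.
have mem_s' c :
    (c \in x' :: s') = [|| c == ((last x s).1, N.+2), c == x' | c \in x :: s].
  by rewrite /s' -!rcons_cons mem_rcons in_cons [c \in x' :: _]in_cons.
have on_path c : c \in x' :: s' -> real_cell N c -> P1 c.
  rewrite mem_s' => /or3P[/eqP->|/eqP->|/Pxs/andP[] //]; rewrite /real_cell /=; lia.
have rows' : all (fun c => 1 < c.1 <= N.+1) (x' :: s').
  apply/allP => c; rewrite mem_s' => /or3P[/eqP->|/eqP->|/Pxs/andP[]] /=.
  - by case/andP: (Pxs _ (mem_last x s)) => /andP[->].
  - by case/andP: (Pxs x (mem_head _ _)) => /andP[->].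
  - by move=> /andP[->].
have off : all (fun c => real_cell N c && (c \notin x' :: s')) (y :: t).
  apply/allP => c /(allP Pt) /andP[rc P2c]; rewrite rc /=.
  by apply/negP => /on_path /(_ rc) /disj /(_ P2c).
have first_col : x'.2 = 1 by [].
have last_col : (last x' s').2 = N.+2 by rewrite /= last_rcons.
have /andP[/andP[_ ly2] ly_off] := allP off _ (mem_last y t).
have := above_cut_path ps' first_col last_col rows' pt off.
rewrite (above_cut_top ps' first_col last_col rows' y1).
by rewrite (above_cut_bottom ps' first_col last_col rows' ly_off t1 ly2).
Qed.

(** * A level set of a Lipschitz function crosses the board *)

Section Levels.
Variable N : nat.
Hypothesis N_gt0 : 0 < N.

Definition transpose (c : cell) : cell := (c.2, c.1).

Lemma crossing_transpose (coord coord' : cell -> nat) (R : rel cell) (P : pred cell) :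
  (forall c, coord' (transpose c) = coord c) ->
  (forall a b, R (transpose a) (transpose b) = R a b) ->
  crossing N coord R (fun c => P (transpose c)) -> crossing N coord' R P.
Proof.
move=> coordT RT [x [s [p Ps x2 l2]]]; exists (transpose x), (map transpose s); split.
- by elim: s x {Ps l2 x2} p => //= y s IHs x /andP[xy p]; rewrite RT xy IHs.
- rewrite -map_cons all_map; apply: sub_all Ps => c /=.
  by rewrite /real_cell /= => /andP[/andP[-> ->] ->].
- by rewrite coordT.
- by rewrite last_map coordT.
Qed.

Lemma hex_transpose (A : pred cell) : crossing N fst adj4 A \/ crossing N snd adj8 (predC A).
Proof.
have adj4T a b : adj4 (transpose a) (transpose b) = adj4 a b by rewrite /adj4 addnC.
have adj8T a b : adj8 (transpose a) (transpose b) = adj8 a b by rewrite /adj8 andbC.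
by case: (hex N_gt0 (fun c => A (transpose c))) => h; [left|right];
  apply: crossing_transpose h.
Qed.

Lemma sub_crossing coord (R : rel cell) (P Q : pred cell) :
  subpred P Q -> crossing N coord R P -> crossing N coord R Q.
Proof.
move=> PQ [x [s [p Ps x2 l2]]]; exists x, s; split => //.
by apply: sub_all Ps => c /andP[-> /PQ].
Qed.

Lemma row_crossing (P : pred cell) :
  (forall c, real_cell N c -> c.1 = 2 -> P c) -> crossing N snd adj4 P.
Proof.
move=> rowP; pose row := [seq (2, j) | j <- iota 3 N.-1].
have row_path m n : path adj4 (2, m) [seq (2, j) | j <- iota m.+1 n] /\
    last (2, m) [seq (2, j) | j <- iota m.+1 n] = (2, m + n).
  elim: n m => [|n IHn] m /=; first by rewrite addn0.
  have [p l] := IHn m.+1; rewrite p l addSnnS /adj4 /natdist /=; split => //; lia.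
have [p l] := row_path 2 N.-1; exists (2, 2), row; split => //.
- apply/allP => c; rewrite in_cons => /orP[/eqP->|/mapP[j]].
    by rewrite rowP // /real_cell /=; lia.
  rewrite mem_iota => hj ->; have rc : real_cell N (2, j) by rewrite /real_cell /=; lia.
  by rewrite rc rowP.
- by rewrite l /=; lia.
Qed.

Local Open Scope ring_scope.
Variable f : cell -> int.
Hypothesis f_lipschitz :
  forall a b, real_cell N a -> real_cell N b -> adj4 a b -> `|f a - f b| <= 1.

Lemma path_level_side x s (t : int) : path adj4 x s ->
  all (fun c => real_cell N c && (f c != t)) (x :: s) ->
  (f x < t -> all (fun c => real_cell N c && (f c < t)) (x :: s)) /\
  (t < f x -> all (fun c => real_cell N c && (t < f c)) (x :: s)).
Proof.
elim: s x => [|y s IHs] x /=; first by move=> _ /andP[/andP[-> _] _]; split => ->.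
move=> /andP[xy p] /andP[/andP[rx fx] ys].
have [IH1 IH2] := IHs y p ys; move: ys => /= /andP[/andP[ry fy] _].
have L := f_lipschitz rx ry xy.
by split => h; rewrite rx h /=; [apply: IH1 | apply: IH2]; move: L fy h; lia.
Qed.

Lemma crossing_off_level coord (t : int) :
  crossing N coord adj4 (fun c => f c != t) ->
  crossing N coord adj4 (fun c => f c < t) \/ crossing N coord adj4 (fun c => t < f c).
Proof.
move=> [x [s [p Ps x2 l2]]]; have [h1 h2] := path_level_side p Ps.
have : f x != t by case/andP: Ps => /andP[].
by case: ltgtP => // h _; [left|right]; exists x, s; split => //; [exact: h1|exact: h2].
Qed.

Definition sublevel_crossing t := crossing N snd adj4 (fun c => f c <= t).

(* If the level set of [t0] does not cross, hex gives crossings of [f != t0]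
   in both directions; by the Lipschitz bound each stays on one side of
   [t0], and every combination of sides contradicts either the choice of
   [t0] or [no_disjoint_crossings]. *)
Lemma level_crossing_at_threshold (t0 : int) :
  sublevel_crossing t0 -> ~ sublevel_crossing (t0 - 1) ->
  crossing N snd adj8 (fun c => f c == t0) \/ crossing N fst adj8 (fun c => f c == t0).
Proof.
move=> below not_below.
have no_lt : ~ crossing N snd adj4 (fun c => f c < t0).
  by move/(sub_crossing (Q := fun c => f c <= t0 - 1)) => h; apply/not_below/h => c; lia.
have eq_t0 c : ~~ (f c != t0) = (f c == t0) by rewrite negbK.
case: (hex N_gt0 (fun c => f c != t0)) => [h|h]; last first.
  by right; apply: sub_crossing h => c /=; rewrite eq_t0.
case: (crossing_off_level h) => // above.
case: (hex_transpose (fun c => f c != t0)) => [h'|h']; last first.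
  by left; apply: sub_crossing h' => c /=; rewrite eq_t0.
exfalso; case: (crossing_off_level h') => h2.
- by apply: (no_disjoint_crossings _ above h2) => c; lia.
- by apply: (no_disjoint_crossings _ below h2) => c; lia.
Qed.

Definition abs_sum := (\sum_(i < N) \sum_(j < N) absz (f (i.+2, j.+2)))%N.

Lemma abs_le_abs_sum c : real_cell N c -> (absz (f c) <= abs_sum)%N.
Proof.
case: c => a b; rewrite /real_cell /= => /andP[/andP[a1 a2] /andP[b1 b2]].
have ia : (a - 2 < N)%N by lia.
have ib : (b - 2 < N)%N by lia.
rewrite /abs_sum (bigD1 (Ordinal ia)) //= (bigD1 (Ordinal ib)) //=.
have -> : (a - 2).+2 = a by lia.
have -> : (b - 2).+2 = b by lia.
by rewrite -addnA leq_addr.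
Qed.

Lemma crossing_threshold : exists t0, sublevel_crossing t0 /\ ~ sublevel_crossing (t0 - 1).
Proof.
pose tl : int := - (abs_sum%:Z) - 1.
have not_tl : ~ sublevel_crossing tl.
  move=> [x [s [_ /= /andP[/andP[rx fx] _] _ _]]].
  by have := abs_le_abs_sum rx; move: fx; rewrite /tl; lia.
suff [n cross_n] : exists n : nat, sublevel_crossing (tl + n%:Z).
  elim: n cross_n => [|n IHn] cross_n; first by rewrite addr0 in cross_n.
  case: (pselect (sublevel_crossing (tl + n%:Z))) => [/IHn //|below].
  exists (tl + n.+1%:Z); split => //.
  by have -> : tl + n.+1%:Z - 1 = tl + n%:Z by lia.
exists (2 * abs_sum).+1; have -> : tl + (2 * abs_sum).+1%:Z = abs_sum%:Z by rewrite /tl; lia.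
by apply: row_crossing => c rc _; have := abs_le_abs_sum rc; lia.
Qed.

Lemma level_set_crossing : exists p : int,
  crossing N snd adj8 (fun c => f c == p) \/ crossing N fst adj8 (fun c => f c == p).
Proof.
have [t0 [below not_below]] := crossing_threshold.
by exists t0; exact: level_crossing_at_threshold.
Qed.
End Levels.

(** * From crossings of cells to connected unions of cubes *)

Import numFieldNormedType.Exports.
Local Open Scope classical_set_scope.
Local Open Scope ring_scope.

Lemma convex_connected (R : realType) (V : normedModType R) (A : set V) :
  (forall a b t, A a -> A b -> 0 <= t <= 1 -> A (a + t *: (b - a))) -> connected A.
Proof.
move=> convA; have [->|/set0P[a Aa]] := eqVneq A set0; first exact: connected0.
pose seg b := (fun t : R => a + t *: (b - a)) @` `[0, 1].
have -> : A = \bigcup_(b in A) seg b.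
  apply/seteqP; split => [b Ab|b [c Ac [t t01 <-]]]; last first.
    by apply: convA; rewrite // -in_itv; apply/mem_set.
  exists b => //; exists 1; first by rewrite /= in_itv /= lexx ler01.
  by rewrite scale1r addrC subrK.
apply: bigcup_connected.
  exists a => b Ab; exists 0; first by rewrite /= in_itv /= lexx ler01.
  by rewrite scale0r addr0.
move=> b _; apply: connected_continuous_connected; first exact: segment_connected.
apply: continuous_subspaceT => t.
have cst : {for t, continuous (fun _ : R => a)} by apply: cst_continuous.
have lin : {for t, continuous (fun t : R => t *: (b - a))} by apply: scalel_continuous.
exact: continuousD cst lin.
Qed.

Lemma cube_connected n k (i : cube_idx n k) : connected (cube i).
Proof.
apply: convex_connected => a b t ca cb /andP[t0 t1] s.
have /andP[la ha] := ca s; have /andP[lb hb] := cb s.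
rewrite !mxE; apply/andP; split; nra.
Qed.

Lemma ord2_cases (s : 'I_2) : s = ord0 \/ s = ord_max.
Proof. by case: s => [[|[|//]]] p; [left|right]; apply/val_inj. Qed.

Definition cell_coord (s : 'I_2) (c : cell) := if s == ord0 then c.1 else c.2.

Section CubesOfCells.
Variable k' : nat.
Local Notation k := k'.+1.

Definition cube_of_cell (c : cell) : cube_idx 2 k :=
  [ffun s => inord (cell_coord s c - 2)%N].

Lemma cube_of_cellE c s : real_cell k c -> cube_of_cell c s = (cell_coord s c - 2)%N :> nat.
Proof.
rewrite /real_cell => /andP[c1 c2]; rewrite ffunE inordK //.
by case: (ord2_cases s) => ->; rewrite /cell_coord /=; lia.
Qed.

Lemma le_lo_hi u w : (lo k u <= hi k w) = (u <= w.+1)%N.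
Proof. by rewrite /lo /hi ler_pM2r ?invr_gt0 ?ltr0n // ler_nat. Qed.

Lemma le_lo u w : (lo k u <= lo k w) = (u <= w)%N.
Proof. by rewrite /lo ler_pM2r ?invr_gt0 ?ltr0n // ler_nat. Qed.

Lemma lt_lo_hi u w : (lo k u < hi k w) = (u <= w)%N.
Proof. by rewrite /lo /hi ltr_pM2r ?invr_gt0 ?ltr0n // ltr_nat. Qed.

Lemma interval_meet (u w : nat) : (natdist u w <= 1)%N ->
  Num.max (lo k u) (lo k w) <= Num.min (hi k u) (hi k w) /\
  (Num.max (lo k u) (lo k w) < Num.min (hi k u) (hi k w)) = (u == w).
Proof.
rewrite ge_max gt_max !le_min !lt_min !le_lo_hi !lt_lo_hi /natdist => uw.
by split; lia.
Qed.

Lemma adj8_cube_dist a b s : real_cell k a -> real_cell k b -> adj8 a b ->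
  (natdist (cube_of_cell a s) (cube_of_cell b s) <= 1)%N.
Proof.
move=> ra rb; rewrite !cube_of_cellE //; move: ra rb.
by case: (ord2_cases s) => ->; rewrite /real_cell /adj8 /cell_coord /natdist /=; lia.
Qed.

Lemma adj4_adj8 a b : adj4 a b -> adj8 a b.
Proof. by rewrite /adj4 /adj8 /natdist; lia. Qed.

Lemma inter_dim_adj4 a b : real_cell k a -> real_cell k b -> adj4 a b ->
  inter_dim (cube_of_cell a) (cube_of_cell b) = 1.
Proof.
move=> ra rb ab; have dist s := adj8_cube_dist s ra rb (adj4_adj8 ab).
rewrite /inter_dim /inter_lo /inter_hi.
have -> : [forall s, Num.max (lo k (cube_of_cell a s)) (lo k (cube_of_cell b s)) <=
                     Num.min (hi k (cube_of_cell a s)) (hi k (cube_of_cell b s))].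
  by apply/forallP => s; exact: (interval_meet (dist s)).1.
set s0 : 'I_2 := if a.1 == b.1 then ord0 else ord_max.
rewrite (@eq_card _ _ (pred1 s0)) ?card1 // => s /=.
rewrite !inE (interval_meet (dist s)).2 !cube_of_cellE // /s0; move: ra rb ab.
have n01 : (ord0 == ord_max :> 'I_2) = false by [].
have n10 : (ord_max == ord0 :> 'I_2) = false by [].
rewrite /real_cell /adj4 /natdist /cell_coord.
by case: (ord2_cases s) => ->; case: ifP; rewrite ?eqxx ?n01 ?n10 /=; lia.
Qed.

Lemma cube_point_at (i : cube_idx 2 k) (s : 'I_2) (v : RR) :
  lo k (i s) <= v <= hi k (i s) -> exists2 z, cube i z & z ord0 s = v.
Proof.
move=> hv; exists (\row_j if j == s then v else lo k (i j)); last by rewrite mxE eqxx.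
by move=> j; rewrite mxE; case: eqP => [->//|_]; rewrite lexx le_lo_hi /=.
Qed.

Lemma cubes_meet_adj8 a b : real_cell k a -> real_cell k b -> adj8 a b ->
  cube (cube_of_cell a) `&` cube (cube_of_cell b) !=set0.
Proof.
move=> ra rb ab; have dist s := adj8_cube_dist s ra rb ab.
exists (\row_j lo k (maxn (cube_of_cell a j) (cube_of_cell b j))).
by split => j; rewrite mxE le_lo le_lo_hi; have := dist j; rewrite /natdist; lia.
Qed.

Definition cubes_of (L : seq cell) : {set cube_idx 2 k} :=
  [set K | has (fun c => cube_of_cell c == K) L]%SET.

Lemma cube_union_cubes_of (L : seq cell) :
  cube_union (cubes_of L) = \bigcup_(c in [set c | c \in L]) cube (cube_of_cell c).
Proof.
apply/seteqP; split => z /=.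
- by move=> [K]; rewrite inE => /hasP[c cL /eqP <-] zK; exists c.
- by move=> [c cL zc]; exists (cube_of_cell c) => //; rewrite inE; apply/hasP; exists c.
Qed.

Lemma connected_cubes_of x s : path adj8 x s -> all (real_cell k) (x :: s) ->
  connected (cube_union (cubes_of (x :: s))).
Proof.
rewrite cube_union_cubes_of; elim: s x => [|y s IHs] x.
  move=> _ _; rewrite (_ : [set c | c \in [:: x]] = [set x]); last first.
    by apply/seteqP; split => c; rewrite /= mem_seq1 => /eqP.
  by rewrite bigcup_set1; exact: cube_connected.
move=> /= /andP[xy p] /andP[rx rs].
rewrite (_ : [set c | c \in [:: x, y & s]] = x |` [set c | c \in y :: s]); last first.
  apply/seteqP; split => c /=.
  - by rewrite in_cons => /orP[/eqP->|cs]; [left|right].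
  - by case=> [->|cs]; rewrite in_cons ?eqxx ?cs ?orbT.
rewrite bigcup_setU1; apply: connectedU; last 2 first.
- exact: cube_connected.
- exact: IHs.
have [z [zx zy]] := cubes_meet_adj8 rx (proj1 (andP rs)) xy.
by exists z; split => //; exists y; rewrite /= ?mem_head.
Qed.

Lemma cube_face0 c s : cube_of_cell c s = 0 :> nat ->
  exists2 z, cube (cube_of_cell c) z & z ord0 s = 0.
Proof.
have lo0 : lo k 0 = 0 by rewrite /lo mul0r.
by move=> e; apply: cube_point_at; rewrite e -[X in _ <= X <= _]lo0 lexx le_lo_hi.
Qed.

Lemma cube_face1 c s : cube_of_cell c s = k' :> nat ->
  exists2 z, cube (cube_of_cell c) z & z ord0 s = 1.
Proof.
have hi1 : hi k k' = 1 by rewrite /hi divff // pnatr_eq0.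
by move=> e; apply: cube_point_at; rewrite e -hi1 lexx le_lo_hi andbT.
Qed.
End CubesOfCells.

Lemma crossing_connects_faces k' (coord : cell -> nat) (s : 'I_2) (P : pred cell) :
  coord =1 cell_coord s -> crossing k'.+1 coord adj8 P ->
  exists2 L : seq cell, all P L & connects_opposite_faces (cube_union (cubes_of k' L)).
Proof.
move=> coordE [x [t [pt Pt x2 l2]]]; exists (x :: t).
  by apply: sub_all Pt => c /andP[].
have real_xt : all (real_cell k'.+1) (x :: t) by apply: sub_all Pt => c /andP[].
split; first exact: connected_cubes_of.
have in_union c : c \in x :: t -> cube (cube_of_cell k' c) `<=` cube_union (cubes_of k' (x :: t)).
  by move=> ct z zc; rewrite cube_union_cubes_of; exists c.
have lx := mem_last x t.
exists s; split.
- have [z zx z0] : exists2 z, cube (cube_of_cell k' x) z & z ord0 s = 0.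
    by apply: cube_face0; rewrite cube_of_cellE ?(allP real_xt) ?mem_head // -coordE x2.
  by exists z => //; apply: in_union zx; rewrite mem_head.
- have [z zl z1] : exists2 z, cube (cube_of_cell k' (last x t)) z & z ord0 s = 1.
    by apply: cube_face1; rewrite cube_of_cellE ?(allP real_xt) // -coordE l2 subn2.
  by exists z => //; apply: in_union zl.
Qed.

Lemma Chat_admissible_2 m : (m <= 1)%N -> Chat_admissible 2 m 1.
Proof.
move=> m1 [//|k'] _ F F_lip.
pose f c := F (cube_of_cell k' c) 0 0.
have f_lip a b : real_cell k'.+1 a -> real_cell k'.+1 b -> adj4 a b -> `|f a - f b| <= 1.
  move=> ra rb ab; have := F_lip (cube_of_cell k' a) (cube_of_cell k' b).
  by rewrite (inter_dim_adj4 ra rb ab) lez_nat => /(_ m1) /forallP /(_ 0).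
have [p cross] := level_set_crossing (ltn0Sn k') f_lip.
have [L Lp faces] : exists2 L : seq cell, all (fun c => f c == p) L &
    connects_opposite_faces (cube_union (cubes_of k' L)).
  by case: cross; [apply: (@crossing_connects_faces _ _ ord_max)|
                   apply: (@crossing_connects_faces _ _ ord0)].
exists [:: \row_(j < 1) p], (cubes_of k' L); split => //.
- by move=> a b; rewrite !mem_seq1 => /eqP-> /eqP->; exists [::].
- move=> K; rewrite inE => /hasP[c cL /eqP <-]; rewrite mem_seq1; apply/eqP/rowP => j.
  by rewrite (ord1 j) mxE; apply/eqP/(allP Lp).
Qed.

Lemma Chat_admissible_ge1 m (C : RR) : Chat_admissible 2 m C -> 1 <= C.
Proof.
move=> admC; have cst0 : forall K1 K2 : cube_idx 2 1, m%:Z <= inter_dim K1 K2 ->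
    linf_le1 ((fun _ => 0 : Zvec 2) K1) ((fun _ => 0 : Zvec 2) K2).
  by move=> *; apply/forallP => t; rewrite !mxE subrr normr0.
have [[|v P] [S [_ _ sizeP FS [_ [s [[z [K KS _] _] _]]]]]] := admC 1%N isT _ cst0.
  by have := FS K KS.
by apply: le_trans sizeP; rewrite ler1n.
Qed.

Theorem proposition5p1 : is_Chat 2 0 1 /\ is_Chat 2 1 1.
Proof.
by split; (split; [exact: ltr01 | split; [exact: Chat_admissible_2 |
  move=> C _; exact: Chat_admissible_ge1]]).
Qed.
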